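(* For all $P,Q\in\Gamma_n$, $$0\le \tfrac12 \Delta(P\|Q)\le M_{SG}(P\|Q)\qquad\text{and}\qquad 0\le \tfrac12\xi_{\Delta}(P\|Q)\le \xi_{SG}(P\|Q).$$
   Context: $\Gamma_n=\{P=(p_1,\dots,p_n): p_i>0,\ \sum_i p_i=1\}$, $n\ge2$. For $f:(0,\infty)\to\mathbb{R}$, $C_f(P\|Q)=\sum_{i=1}^n q_i f(p_i/q_i)$; for differentiable $f$, $E_f(P\|Q)=\sum_{i=1}^n (p_i-q_i) f'(p_i/q_i)$ and $\xi_f=E_f-C_f$. With $f_{SG}(x)=\sqrt{(x^2+1)/2}-\sqrt x$ and $f_\Delta(x)=\frac{(x-1)^2}{x+1}$: $M_{SG}=C_{f_{SG}}=\sum_i\big(\sqrt{(p_i^2+q_i^2)/2}-\sqrt{p_iq_i}\big)$, $\Delta=C_{f_\Delta}=\sum_i\frac{(p_i-q_i)^2}{p_i+q_i}$, $\xi_{SG}=\xi_{f_{SG}}$, $\xi_\Delta=\xi_{f_\Delta}$. *)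

From Stdlib Require Import Reals Lra.
From Coquelicot Require Import Coquelicot.
Open Scope R_scope.

Fixpoint fsum (n : nat) (a : nat -> R) : R :=
  match n with
  | O => 0
  | S m => fsum m a + a m
  end.

Definition Gamma (n : nat) (p : nat -> R) : Prop :=
  (forall i, (i < n)%nat -> 0 < p i) /\ fsum n p = 1.

Definition Cf (f : R -> R) (n : nat) (p q : nat -> R) : R :=
  fsum n (fun i => q i * f (p i / q i)).

Definition Ef (f : R -> R) (n : nat) (p q : nat -> R) : R :=
  fsum n (fun i => (p i - q i) * Derive f (p i / q i)).

Definition xi (f : R -> R) (n : nat) (p q : nat -> R) : R := Ef f n p q - Cf f n p q.

Definition f_SG (x : R) : R := sqrt ((x ^ 2 + 1) / 2) - sqrt x.
Definition f_Delta (x : R) : R := (x - 1) ^ 2 / (x + 1).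

Definition M_SG_div := Cf f_SG.
Definition Delta_div := Cf f_Delta.
Definition xi_SG := xi f_SG.
Definition xi_Delta := xi f_Delta.

(** Every quantity in the statement is a Csiszár divergence [C_h] with [q_i > 0]:
    [E_f - C_f = C_h] for the generator [h x = (x - 1) f'(x) - f(x)].  Since [C_h]
    is monotone in [h] on [(0, oo)], it suffices to compare generators pointwise.
    With [t = sqrt x] and [s = sqrt ((x^2+1)/2)] one has [f_SG x = s - t],
    and squaring [2 (x+1) s >= 2 t (x+1) + (x-1)^2] (the difference of squares is
    [(x-1)^2 (t-1)^4]) gives [f_Delta / 2 <= f_SG].  For the generators,
    [h_Delta x = 2 ((x-1)/(x+1))^2] and [h_SG x = (x+1) f_SG x / (2 t s)]; the
    previous bound and [4 t s <= (x+1)^2], i.e. [8 x (x^2+1) <= (x+1)^4], which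
    is [(x-1)^4 >= 0], give [h_Delta / 2 <= h_SG]. *)

From Stdlib Require Import Reals Lra Psatz.
From Coquelicot Require Import Coquelicot.
Open Scope R_scope.

Lemma fsum_ext n (a b : nat -> R) :
  (forall i, (i < n)%nat -> a i = b i) -> fsum n a = fsum n b.
Proof.
  induction n as [|n IH]; intros Hab; simpl; [reflexivity|].
  rewrite IH by (intros; apply Hab; lia).
  rewrite Hab by lia; reflexivity.
Qed.

Lemma fsum_le n (a b : nat -> R) :
  (forall i, (i < n)%nat -> a i <= b i) -> fsum n a <= fsum n b.
Proof.
  induction n as [|n IH]; intros Hab; simpl; [lra|].
  assert (fsum n a <= fsum n b) by (apply IH; intros; apply Hab; lia).
  assert (a n <= b n) by (apply Hab; lia).
  lra.
Qed.

Lemma fsum_sub n (a b : nat -> R) :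
  fsum n (fun i => a i - b i) = fsum n a - fsum n b.
Proof. induction n as [|n IH]; simpl; [lra|]. rewrite IH; ring. Qed.

Lemma fsum_divr n (a : nat -> R) c :
  fsum n (fun i => a i / c) = fsum n a / c.
Proof. induction n as [|n IH]; simpl; [unfold Rdiv; ring|]. rewrite IH; unfold Rdiv; ring. Qed.

Lemma fsum_const0 n : fsum n (fun _ => 0) = 0.
Proof. induction n as [|n IH]; simpl; [|rewrite IH]; ring. Qed.

Section Csiszar.

Variables (n : nat) (p q : nat -> R).
Hypothesis p_pos : forall i, (i < n)%nat -> 0 < p i.
Hypothesis q_pos : forall i, (i < n)%nat -> 0 < q i.

Lemma Cf_le (f g : R -> R) :
  (forall x, 0 < x -> f x <= g x) -> Cf f n p q <= Cf g n p q.
Proof.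
  intros Hfg; apply fsum_le; intros i Hi.
  specialize (p_pos i Hi); specialize (q_pos i Hi).
  apply Rmult_le_compat_l; [lra|].
  apply Hfg, Rdiv_lt_0_compat; assumption.
Qed.

Lemma Cf_divr (f : R -> R) c :
  Cf (fun x => f x / c) n p q = Cf f n p q / c.
Proof.
  unfold Cf; rewrite <- fsum_divr.
  apply fsum_ext; intros; unfold Rdiv; ring.
Qed.

Lemma Cf_const0 : Cf (fun _ => 0) n p q = 0.
Proof.
  unfold Cf; transitivity (fsum n (fun _ => 0)); [|apply fsum_const0].
  apply fsum_ext; intros; ring.
Qed.

Definition xi_generator (f : R -> R) (x : R) : R := (x - 1) * Derive f x - f x.

Lemma xi_Cf_xi_generator (f : R -> R) :
  xi f n p q = Cf (xi_generator f) n p q.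
Proof.
  unfold xi, Ef, Cf, xi_generator; rewrite <- fsum_sub.
  apply fsum_ext; intros i Hi; specialize (q_pos i Hi).
  field; lra.
Qed.

End Csiszar.

Lemma Derive_f_Delta x : 0 < x -> Derive f_Delta x = (x - 1) * (x + 3) / (x + 1) ^ 2.
Proof.
  intros Hx; apply is_derive_unique; unfold f_Delta; auto_derive.
  - lra.
  - field; lra.
Qed.

Lemma Derive_f_SG x : 0 < x ->
  Derive f_SG x = x / (2 * sqrt ((x ^ 2 + 1) / 2)) - 1 / (2 * sqrt x).
Proof.
  intros Hx; apply is_derive_unique; unfold f_SG; auto_derive.
  - split; [nra|split; [lra|exact I]].
  - assert (0 < sqrt x) by (apply sqrt_lt_R0; lra).
    assert (0 < sqrt ((x * (x * 1) + 1) * / 2)) by (apply sqrt_lt_R0; nra).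
    replace ((x * (x * 1) + 1) * / 2) with ((x ^ 2 + 1) / 2) in * by (unfold Rdiv; ring).
    field; lra.
Qed.

Lemma f_Delta_ge0 x : 0 < x -> 0 <= f_Delta x.
Proof.
  intros Hx; unfold f_Delta, Rdiv.
  apply Rmult_le_pos; [apply pow2_ge_0|apply Rlt_le, Rinv_0_lt_compat; lra].
Qed.

Lemma f_Delta_half_le_f_SG x : 0 < x -> f_Delta x / 2 <= f_SG x.
Proof.
  intros Hx; unfold f_SG, f_Delta.
  set (t := sqrt x); set (s := sqrt ((x ^ 2 + 1) / 2)).
  assert (Ht : 0 < t) by (apply sqrt_lt_R0; lra).
  assert (Htt : t * t = x) by (apply sqrt_sqrt; lra).
  assert (Hs : 0 < s) by (apply sqrt_lt_R0; nra).
  assert (Hss : s * s = (x ^ 2 + 1) / 2) by (apply sqrt_sqrt; nra).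
  set (A := 2 * t * (x + 1) + (x - 1) ^ 2).
  assert (A_le : A <= 2 * (x + 1) * s).
  { assert (diff_sq : (2 * (x + 1) * s) ^ 2 - A ^ 2 = (x - 1) ^ 2 * ((t - 1) ^ 2) ^ 2).
    { replace ((2 * (x + 1) * s) ^ 2) with (4 * (x + 1) ^ 2 * (s * s)) by ring.
      rewrite Hss, <- Htt; unfold A; rewrite <- Htt; field. }
    assert (0 <= (x - 1) ^ 2 * ((t - 1) ^ 2) ^ 2)
      by (apply Rmult_le_pos; apply pow2_ge_0).
    apply Rsqr_incr_0_var; [unfold Rsqr; nra|nra]. }
  replace ((x - 1) ^ 2 / (x + 1) / 2) with ((A - 2 * t * (x + 1)) / (2 * (x + 1)))
    by (unfold A; field; lra).
  apply Rmult_le_reg_r with (2 * (x + 1)); [lra|].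
  unfold Rdiv; rewrite Rmult_assoc, Rinv_l by lra.
  nra.
Qed.

Lemma four_sqrt_mul_le x : 0 < x -> 4 * (sqrt x * sqrt ((x ^ 2 + 1) / 2)) <= (x + 1) ^ 2.
Proof.
  intros Hx; rewrite <- sqrt_mult by (lra || nra).
  set (y := x * ((x ^ 2 + 1) / 2)).
  assert (0 <= y) by (unfold y; nra).
  assert (Hyy : sqrt y * sqrt y = y) by (apply sqrt_sqrt; assumption).
  assert (0 <= sqrt y) by apply sqrt_pos.
  assert (((x + 1) ^ 2) ^ 2 - 16 * y = ((x - 1) ^ 2) ^ 2) by (unfold y; field).
  assert (0 <= ((x - 1) ^ 2) ^ 2) by apply pow2_ge_0.
  nra.
Qed.

Lemma xi_generator_f_Delta x : 0 < x -> xi_generator f_Delta x = 2 * ((x - 1) / (x + 1)) ^ 2.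
Proof.
  intros Hx; unfold xi_generator; rewrite Derive_f_Delta by lra; unfold f_Delta.
  field; lra.
Qed.

Lemma xi_generator_f_SG x : 0 < x ->
  xi_generator f_SG x = (x + 1) * f_SG x / (2 * sqrt x * sqrt ((x ^ 2 + 1) / 2)).
Proof.
  intros Hx; unfold xi_generator; rewrite Derive_f_SG by lra; unfold f_SG.
  assert (Ht : 0 < sqrt x) by (apply sqrt_lt_R0; lra).
  assert (Htt : sqrt x * sqrt x = x) by (apply sqrt_sqrt; lra).
  assert (Hs : 0 < sqrt ((x ^ 2 + 1) / 2)) by (apply sqrt_lt_R0; nra).
  assert (Hss : sqrt ((x ^ 2 + 1) / 2) * sqrt ((x ^ 2 + 1) / 2) = (x ^ 2 + 1) / 2)
    by (apply sqrt_sqrt; nra).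
  set (t := sqrt x) in *; set (s := sqrt ((x ^ 2 + 1) / 2)) in *.
  apply Rmult_eq_reg_r with (2 * t * s); [|nra].
  field_simplify; [|lra|nra].
  nra.
Qed.

Lemma xi_generator_f_Delta_ge0 x : 0 < x -> 0 <= xi_generator f_Delta x.
Proof.
  intros Hx; rewrite xi_generator_f_Delta by lra.
  assert (0 <= ((x - 1) / (x + 1)) ^ 2) by apply pow2_ge_0; lra.
Qed.

Lemma xi_generator_f_Delta_half_le_f_SG x : 0 < x -> xi_generator f_Delta x / 2 <= xi_generator f_SG x.
Proof.
  intros Hx; rewrite xi_generator_f_Delta, xi_generator_f_SG by lra.
  pose proof (f_Delta_half_le_f_SG x Hx) as HSG; unfold f_Delta in HSG.
  pose proof (four_sqrt_mul_le x Hx) as Hts.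
  assert (0 < sqrt x * sqrt ((x ^ 2 + 1) / 2))
    by (apply Rmult_lt_0_compat; apply sqrt_lt_R0; nra).
  set (ts := sqrt x * sqrt ((x ^ 2 + 1) / 2)) in *.
  replace (2 * sqrt x * sqrt ((x ^ 2 + 1) / 2)) with (2 * ts) by (unfold ts; ring).
  apply Rle_trans with ((x - 1) ^ 2 / (4 * ts)).
  - replace (2 * ((x - 1) / (x + 1)) ^ 2 / 2) with ((x - 1) ^ 2 / (x + 1) ^ 2)
      by (field; lra).
    apply Rmult_le_compat_l; [apply pow2_ge_0|].
    apply Rinv_le_contravar; lra.
  - replace ((x - 1) ^ 2 / (4 * ts)) with ((x + 1) * ((x - 1) ^ 2 / (x + 1) / 2) / (2 * ts))
      by (field; lra).
    apply Rmult_le_compat_r; [apply Rlt_le, Rinv_0_lt_compat; lra|].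
    apply Rmult_le_compat_l; lra.
Qed.

Theorem proposition5p3 (n : nat) (p q : nat -> R) :
  (2 <= n)%nat -> Gamma n p -> Gamma n q ->
  (0 <= Delta_div n p q / 2 /\ Delta_div n p q / 2 <= M_SG_div n p q) /\
  (0 <= xi_Delta n p q / 2 /\ xi_Delta n p q / 2 <= xi_SG n p q).
Proof.
  intros _ [Hp _] [Hq _].
  unfold Delta_div, M_SG_div, xi_Delta, xi_SG.
  rewrite !(xi_Cf_xi_generator n p q Hq), <- !(Cf_divr n p q).
  rewrite <- (Cf_const0 n p q).
  split; split; apply (Cf_le n p q Hp Hq); intros x Hx.
  - apply Rmult_le_pos; [apply f_Delta_ge0; exact Hx|lra].
  - apply f_Delta_half_le_f_SG; exact Hx.
  - apply Rmult_le_pos; [apply xi_generator_f_Delta_ge0; exact Hx|lra].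
  - apply xi_generator_f_Delta_half_le_f_SG; exact Hx.
Qed.
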